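(* Let $\mathcal{G}$ be a groupoid and $K$ a commutative ring with unit. The $K$-SAC $K\mathcal{G}$ has a filtration $\{F_nK\mathcal{G}(p_0,p_1)\}_{n\ge0}$, $p_0,p_1\in\operatorname{Ob}\mathcal{G}$, such that $F_nK\mathcal{G}(q,q)=I\mathcal{G}(q,q)^n$ for all $q$ and $n\ge0$. The filtered $K$-SAC $K\mathcal{G}$ satisfies conditions (C1) and (C4).
   Context: $K\mathcal{G}$ has the same objects as $\mathcal{G}$ and $K\mathcal{G}(p_0,p_1)$ the free $K$-module on $\mathcal{G}(p_0,p_1)$, with bilinearly extended multiplication $\gamma_1\gamma_2:=\gamma_2\circ\gamma_1$. $I\mathcal{G}(q,q)$ is the augmentation ideal (kernel of $\sum a_i\gamma_i\mapsto\sum a_i$) of the group ring $K\mathcal{G}(q,q)$. A filtration on a $K$-SAC $\mathcal{R}$ (a small additive category with $K$-module hom-sets, $K$-bilinear multiplication, and an isomorphism in every non-zero hom-set) is a choice of $K$-submodules $\mathcal{R}(p_0,p_1)=F_0\supset F_1\supset\cdots$ with $F_{n_1}\mathcal{R}(p_0,p_1)\cdot F_{n_2}\mathcal{R}(p_1,p_2)\subset F_{n_1+n_2}\mathcal{R}(p_0,p_2)$. (C1): $\mathcal{R}(q,q)/F_1\mathcal{R}(q,q)\cong K$ for every object $q$. (C4): the multiplication $F_1\mathcal{R}(q,q)^{\otimes n}\to F_n\mathcal{R}(q,q)$ is surjective for every $q$ and $n\ge1$. *)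

From HB Require Import structures.
From mathcomp Require Import all_boot all_algebra.
From mathcomp Require Import finmap.
From mathcomp.multinomials Require Import monalg.

Set Implicit Arguments.
Unset Strict Implicit.
Unset Printing Implicit Defensive.

Import GRing.Theory.
Local Open Scope ring_scope.

(* Composition is written in diagrammatic order, matching the paper's
   convention gamma1 gamma2 := gamma2 o gamma1:
   gmul g1 g2 : Hom p0 p2 for g1 : Hom p0 p1, g2 : Hom p1 p2.
   Hom-sets carry a choiceType structure (always available classically),
   needed for the free module construction {malg K[Hom p0 p1]}. *)
Record groupoid := Groupoid {
  gob : Type;
  ghom : gob -> gob -> choiceType;
  gid : forall p, ghom p p;
  gmul : forall p0 p1 p2, ghom p0 p1 -> ghom p1 p2 -> ghom p0 p2;
  ginv : forall p0 p1, ghom p0 p1 -> ghom p1 p0;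
  gmulA : forall p0 p1 p2 p3 (a : ghom p0 p1) (b : ghom p1 p2) (c : ghom p2 p3),
      gmul a (gmul b c) = gmul (gmul a b) c;
  gmul1g : forall p0 p1 (a : ghom p0 p1), gmul (gid p0) a = a;
  gmulg1 : forall p0 p1 (a : ghom p0 p1), gmul a (gid p1) = a;
  gmulV : forall p0 p1 (a : ghom p0 p1), gmul a (ginv a) = gid p0;
  gmulVg : forall p0 p1 (a : ghom p0 p1), gmul (ginv a) a = gid p1
}.

Notation KG G K p0 p1 := {malg K[@ghom G p0 p1]}.

Section KG.
Variables (G : groupoid) (K : comNzRingType).

Definition KGmul p0 p1 p2 (f : KG G K p0 p1) (g : KG G K p1 p2) : KG G K p0 p2 :=
  \sum_(a <- msupp f) \sum_(b <- msupp g) << f@_a * g@_b *g gmul a b >>.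

Definition KGone q : KG G K q q := << gid q >>.

Definition augmentation q (x : KG G K q q) : K := \sum_(a <- msupp x) x@_a.
Definition augideal q (x : KG G K q q) : Prop := augmentation x = 0.

Definition Ksubmodule p0 p1 (S : KG G K p0 p1 -> Prop) : Prop :=
  S 0 /\ forall (k : K) x y, S x -> S y -> S (k *: x + y).

Fixpoint prodn q (n : nat) (S : KG G K q q -> Prop) (x : KG G K q q) : Prop :=
  match n with
  | 0 => x = KGone q
  | m.+1 => exists y z, S y /\ prodn m S z /\ x = KGmul y z
  end.

Inductive Kspan p0 p1 (S : KG G K p0 p1 -> Prop) : KG G K p0 p1 -> Prop :=
  | Kspan_in x : S x -> Kspan S x
  | Kspan_0 : Kspan S 0
  | Kspan_lin (k : K) x y : Kspan S x -> Kspan S y -> Kspan S (k *: x + y).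

Inductive Addspan p0 p1 (S : KG G K p0 p1 -> Prop) : KG G K p0 p1 -> Prop :=
  | Addspan_in x : S x -> Addspan S x
  | Addspan_0 : Addspan S 0
  | Addspan_add x y : Addspan S x -> Addspan S y -> Addspan S (x + y).

Definition augpow q (n : nat) (x : KG G K q q) : Prop :=
  match n with
  | 0 => True
  | _ => Addspan (prodn n (@augideal q)) x
  end.

Definition is_filtration (F : forall p0 p1, nat -> KG G K p0 p1 -> Prop) : Prop :=
  (forall p0 p1 n, Ksubmodule (F p0 p1 n)) /\
  (forall p0 p1 x, F p0 p1 0 x) /\
  (forall p0 p1 n x, F p0 p1 n.+1 x -> F p0 p1 n x) /\
  (forall p0 p1 p2 n1 n2 x y, F p0 p1 n1 x -> F p1 p2 n2 y ->
      F p0 p2 (n1 + n2) (KGmul x y)).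

(* (C1): R(q,q)/F_1 R(q,q) is isomorphic to K, i.e. there is a K-linear
   surjection R(q,q) -> K with kernel exactly F_1 R(q,q). *)
Definition cond_C1 (F : forall p0 p1, nat -> KG G K p0 p1 -> Prop) : Prop :=
  forall q, exists phi : KG G K q q -> K,
    (forall (k : K) x y, phi (k *: x + y) = k * phi x + phi y) /\
    (forall c : K, exists x, phi x = c) /\
    (forall x, phi x = 0 <-> F q q 1 x).

(* (C4): the multiplication F_1^{(tensor) n} -> F_n is surjective, i.e.
   F_n R(q,q) is the K-span of the products x1 ... xn with xi in F_1. *)
Definition cond_C4 (F : forall p0 p1, nat -> KG G K p0 p1 -> Prop) : Prop :=
  forall q n, (1 <= n)%N -> forall x, F q q n x ->
    Kspan (prodn n (F q q 1)) x.

End KG.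

From mathcomp Require Import all_boot all_algebra finmap.
From mathcomp.multinomials Require Import monalg.

Set Implicit Arguments.
Unset Strict Implicit.
Unset Printing Implicit Defensive.

Import GRing.Theory.
Local Open Scope fset_scope.
Local Open Scope ring_scope.

(* Take [F_n KG(p0,p1)] to be the set of [x] with [x g] in [I(p0,p0)^n] for
   every morphism [g : p1 -> p0].  On the diagonal this is [I^n] because [I^n]
   is a right ideal.  Multiplicativity reduces to the diagonal: if [a : p0 -> p1]
   occurs in [x], then [x y g = (x a^-1) (a (y g a) a^-1)], and conjugation by
   [a] maps [I(p1,p1)^n] into [I(p0,p0)^n] since it is a unital ring map
   preserving the augmentation.  (C1) is the augmentation map itself, and
   (C4) holds because [I^n] is spanned by products of [n] elements of [I]. *)

Section GroupoidAlgebra.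
Variables (G : groupoid) (K : comNzRingType).
Local Notation H := (@ghom G).
Local Notation KT p0 p1 := {malg K[H p0 p1]}.

Lemma KGmulEw p0 p1 p2 (d1 : {fset H p0 p1}) (d2 : {fset H p1 p2})
    (f : KT p0 p1) (g : KT p1 p2) : msupp f `<=` d1 -> msupp g `<=` d2 ->
  KGmul f g = \sum_(a <- d1) \sum_(b <- d2) << f@_a * g@_b *g gmul a b >>.
Proof.
move=> le_d1 le_d2; rewrite /KGmul (big_fset_incl _ le_d1) /=.
  apply/eq_bigr=> a _; apply/big_fset_incl => // b _ /mcoeff_outdom ->.
  by rewrite mulr0 monalgU0.
move=> a _ /mcoeff_outdom fa0.
by rewrite big1 => // b _; rewrite fa0 mul0r monalgU0.
Qed.

Lemma KGmulUU p0 p1 p2 c1 c2 (a : H p0 p1) (b : H p1 p2) :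
  KGmul << c1 *g a >> << c2 *g b >> = << c1 * c2 *g gmul a b >> :> KT p0 p2.
Proof. by rewrite (KGmulEw msuppU_le msuppU_le) !big_seq_fset1 !mcoeffUU. Qed.

Lemma KGmul0l p0 p1 p2 (g : KT p1 p2) : KGmul (0 : KT p0 p1) g = 0.
Proof. by rewrite /KGmul msupp0 big_seq_fset0. Qed.

Lemma KGmul0r p0 p1 p2 (f : KT p0 p1) : KGmul f (0 : KT p1 p2) = 0.
Proof. by rewrite /KGmul msupp0; apply: big1 => *; rewrite big_seq_fset0. Qed.

Lemma KGmulDl p0 p1 p2 (f1 f2 : KT p0 p1) (g : KT p1 p2) :
  KGmul (f1 + f2) g = KGmul f1 g + KGmul f2 g.
Proof.
rewrite (KGmulEw (msuppD_le _ _) (fsubset_refl _)).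
rewrite (KGmulEw (fsubsetUl _ (msupp f2)) (fsubset_refl _)).
rewrite (KGmulEw (fsubsetUr (msupp f1) _) (fsubset_refl _)).
rewrite -big_split; apply/eq_bigr=> a _; rewrite -big_split; apply/eq_bigr=> b _.
by rewrite mcoeffD mulrDl monalgUD.
Qed.

Lemma KGmulDr p0 p1 p2 (f : KT p0 p1) (g1 g2 : KT p1 p2) :
  KGmul f (g1 + g2) = KGmul f g1 + KGmul f g2.
Proof.
rewrite (KGmulEw (fsubset_refl _) (msuppD_le _ _)).
rewrite (KGmulEw (fsubset_refl _) (fsubsetUl _ (msupp g2))).
rewrite (KGmulEw (fsubset_refl _) (fsubsetUr (msupp g1) _)).
rewrite -big_split; apply/eq_bigr=> a _; rewrite -big_split; apply/eq_bigr=> b _.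
by rewrite mcoeffD mulrDr monalgUD.
Qed.

Lemma scale_monalgU p0 p1 (k c : K) (a : H p0 p1) :
  k *: << c *g a >> = << k * c *g a >>.
Proof. by apply/malgP => b; rewrite mcoeffZ !mcoeffU mulrnAr. Qed.

Lemma KGmulZl p0 p1 p2 k (f : KT p0 p1) (g : KT p1 p2) :
  KGmul (k *: f) g = k *: KGmul f g.
Proof.
rewrite (KGmulEw (msuppZ_le _ _) (fsubset_refl _)) /KGmul scaler_sumr.
apply/eq_bigr=> a _; rewrite scaler_sumr; apply/eq_bigr=> b _.
by rewrite scale_monalgU mcoeffZ mulrA.
Qed.

Lemma KGmul_suml p0 p1 p2 I (r : seq I) (F : I -> KT p0 p1) (g : KT p1 p2) :
  KGmul (\sum_(i <- r) F i) g = \sum_(i <- r) KGmul (F i) g.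
Proof. exact: (big_morph (fun f => KGmul f g) (fun f1 f2 => KGmulDl f1 f2 g) (KGmul0l p0 g)). Qed.

Lemma KGmul_sumr p0 p1 p2 I (r : seq I) (F : I -> KT p1 p2) (f : KT p0 p1) :
  KGmul f (\sum_(i <- r) F i) = \sum_(i <- r) KGmul f (F i).
Proof. exact: (big_morph (KGmul f) (KGmulDr f) (KGmul0r p2 f)). Qed.

Lemma KGmul_monoml p0 p1 p2 (f : KT p0 p1) (g : KT p1 p2) :
  KGmul f g = \sum_(a <- msupp f) KGmul << f@_a *g a >> g.
Proof.
apply/eq_bigr=> a _; rewrite (KGmulEw msuppU_le (fsubset_refl _)) big_seq_fset1.
by apply/eq_bigr => b _; rewrite mcoeffUU.
Qed.

Lemma KGmul_monomr p0 p1 p2 (f : KT p0 p1) (g : KT p1 p2) :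
  KGmul f g = \sum_(b <- msupp g) KGmul f << g@_b *g b >>.
Proof.
rewrite [LHS]/KGmul exchange_big; apply/eq_bigr=> b _.
rewrite (KGmulEw (fsubset_refl _) msuppU_le) exchange_big big_seq_fset1.
by apply/eq_bigr => a _; rewrite mcoeffUU.
Qed.

Lemma KGmulA p0 p1 p2 p3 (f : KT p0 p1) (g : KT p1 p2) (h : KT p2 p3) :
  KGmul f (KGmul g h) = KGmul (KGmul f g) h.
Proof.
rewrite (KGmul_monoml f g) KGmul_suml (KGmul_monoml f); apply/eq_bigr=> a _.
rewrite (KGmul_monoml g h) KGmul_sumr (KGmul_monomr _ g) KGmul_suml.
apply/eq_bigr=> b _; rewrite KGmulUU (KGmul_monomr _ h) KGmul_sumr.
rewrite (KGmul_monomr _ h); apply/eq_bigr=> c _.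
by rewrite !KGmulUU mulrA gmulA.
Qed.

Lemma KGmul1l p0 p1 (g : KT p0 p1) : KGmul (KGone K p0) g = g.
Proof.
rewrite KGmul_monomr [RHS]monalgE; apply/eq_bigr=> b _.
by rewrite KGmulUU mul1r gmul1g.
Qed.

Lemma KGmul1r p0 p1 (f : KT p0 p1) : KGmul f (KGone K p1) = f.
Proof.
rewrite KGmul_monoml [RHS]monalgE; apply/eq_bigr=> a _.
by rewrite KGmulUU mulr1 gmulg1.
Qed.

Lemma KGmulUV p0 p1 (a : H p0 p1) :
  KGmul << a >> << ginv a >> = KGone K p0 :> KT p0 p0.
Proof. by rewrite KGmulUU mulr1 gmulV. Qed.

Lemma KGmulVU p0 p1 (a : H p0 p1) :
  KGmul << ginv a >> << a >> = KGone K p1 :> KT p1 p1.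
Proof. by rewrite KGmulUU mulr1 gmulVg. Qed.

Definition aug p0 p1 (x : KT p0 p1) : K := \sum_(a <- msupp x) x@_a.

Lemma augmentationE q (x : KT q q) : augmentation x = aug x.
Proof. by []. Qed.

Lemma aug_mmap p0 p1 (x : KT p0 p1) : aug x = mmap idfun (fun=> 1) x.
Proof. by apply/eq_bigr => a _; rewrite mulr1. Qed.

Lemma augD p0 p1 (x y : KT p0 p1) : aug (x + y) = aug x + aug y.
Proof. by rewrite !aug_mmap raddfD. Qed.

Lemma aug0 p0 p1 : aug (0 : KT p0 p1) = 0.
Proof. by rewrite aug_mmap raddf0. Qed.

Lemma augZ p0 p1 k (x : KT p0 p1) : aug (k *: x) = k * aug x.
Proof.
rewrite !aug_mmap (mmapEw (msuppZ_le _ _)) mmapE mulr_sumr.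
by apply/eq_bigr => a _; rewrite mcoeffZ mulrA.
Qed.

Lemma augU p0 p1 (c : K) (a : H p0 p1) : aug << c *g a >> = c.
Proof. by rewrite aug_mmap mmapU mulr1. Qed.

Lemma aug_sum p0 p1 I (r : seq I) (F : I -> KT p0 p1) :
  aug (\sum_(i <- r) F i) = \sum_(i <- r) aug (F i).
Proof. exact: (big_morph (@aug p0 p1) (@augD p0 p1) (@aug0 p0 p1)). Qed.

Lemma augM p0 p1 p2 (x : KT p0 p1) (y : KT p1 p2) :
  aug (KGmul x y) = aug x * aug y.
Proof.
rewrite /KGmul aug_sum [aug x]/aug mulr_suml; apply/eq_bigr => a _.
by rewrite aug_sum [aug y]/aug mulr_sumr; apply/eq_bigr => b _; rewrite augU.
Qed.

End GroupoidAlgebra.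

Section AugmentationPowers.
Variables (G : groupoid) (K : comNzRingType).
Local Notation H := (@ghom G).
Local Notation KT p0 p1 := {malg K[H p0 p1]}.

Lemma Addspan_map p0 p1 p2 p3 (S : KT p0 p1 -> Prop) (T : KT p2 p3 -> Prop)
    (phi : KT p0 p1 -> KT p2 p3) :
  phi 0 = 0 -> {morph phi : x y / x + y} ->
  (forall x, S x -> Addspan T (phi x)) ->
  forall x, Addspan S x -> Addspan T (phi x).
Proof.
move=> phi0 phiD phiS x; elim=> [y /phiS //| | y z _ IHy _ IHz].
  by rewrite phi0; apply: Addspan_0.
by rewrite phiD; apply: Addspan_add.
Qed.

Lemma Addspan_mono p0 p1 (S T : KT p0 p1 -> Prop) :
  (forall x, S x -> T x) -> forall x, Addspan S x -> Addspan T x.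
Proof. by move=> ST; apply: Addspan_map => // x /ST; apply: Addspan_in. Qed.

Lemma Addspan_Kspan p0 p1 (S : KT p0 p1 -> Prop) x : Addspan S x -> Kspan S x.
Proof.
elim=> [y Sy | | y z _ IHy _ IHz]; first exact: Kspan_in.
  exact: Kspan_0.
by rewrite -[y]scale1r; apply: Kspan_lin.
Qed.

Lemma prodn_morph p0 p1 (S : KT p1 p1 -> Prop) (T : KT p0 p0 -> Prop)
    (phi : KT p1 p1 -> KT p0 p0) :
  phi (KGone K p1) = KGone K p0 ->
  (forall x y, phi (KGmul x y) = KGmul (phi x) (phi y)) ->
  (forall x, S x -> T (phi x)) ->
  forall n x, prodn n S x -> prodn n T (phi x).
Proof.
move=> phi1 phiM phiS; elim=> [|n IHn] x /=; first by move->.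
by move=> [y [z [Sy [Sz ->]]]]; exists (phi y), (phi z); rewrite phiM; auto.
Qed.

Lemma prodn_mono q (S T : KT q q -> Prop) :
  (forall x, S x -> T x) -> forall n x, prodn n S x -> prodn n T x.
Proof. exact: (prodn_morph (phi := id)). Qed.

Lemma prodn_mul q m n (S : KT q q -> Prop) x y :
  prodn m S x -> prodn n S y -> prodn (m + n) S (KGmul x y).
Proof.
elim: m x => [|m IHm] x /=; first by move=> -> Sy; rewrite KGmul1l.
move=> [x1 [x2 [Sx1 [Sx2 ->]]]] Sy; exists x1, (KGmul x2 y).
by rewrite KGmulA; split=> //; split=> //; apply: IHm.
Qed.

Section Diagonal.
Variable q : gob G.
Local Notation I := (@augideal G K q).

Lemma augidealMl (x y : KT q q) : I y -> I (KGmul x y).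
Proof. by rewrite /augideal !augmentationE augM => ->; rewrite mulr0. Qed.

Lemma augidealMr (x y : KT q q) : I x -> I (KGmul x y).
Proof. by rewrite /augideal !augmentationE augM => ->; rewrite mul0r. Qed.

Lemma prodnMl n (x z : KT q q) : prodn n.+1 I z -> prodn n.+1 I (KGmul x z).
Proof.
move=> /= [z1 [z2 [Iz1 [Iz2 ->]]]]; exists (KGmul x z1), z2.
by rewrite KGmulA; split=> //; apply: augidealMl.
Qed.

Lemma prodnMr n (z y : KT q q) : prodn n.+1 I z -> prodn n.+1 I (KGmul z y).
Proof.
elim: n z => [|n IHn] z /= [z1 [z2 [Iz1 [Iz2 ->]]]].
  exists (KGmul z1 y), (KGone K q); rewrite Iz2 !KGmul1r.
  by split=> //; apply: augidealMr.
by exists z1, (KGmul z2 y); rewrite KGmulA; split=> //; split=> //; apply: IHn.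
Qed.

Lemma augpowMl n (x y : KT q q) : augpow n y -> augpow n (KGmul x y).
Proof.
case: n => // n; apply: (Addspan_map (phi := KGmul x)) => [|y1 y2|z Iz].
- exact: KGmul0r.
- exact: KGmulDr.
- by apply: Addspan_in; apply: prodnMl.
Qed.

Lemma augpowMr n (x y : KT q q) : augpow n x -> augpow n (KGmul x y).
Proof.
case: n => // n; apply: (Addspan_map (phi := fun x => KGmul x y)) => [|x1 x2|z Iz].
- exact: KGmul0l.
- exact: KGmulDl.
- by apply: Addspan_in; apply: prodnMr.
Qed.

Lemma augpowM m n (x y : KT q q) :
  augpow m x -> augpow n y -> augpow (m + n) (KGmul x y).
Proof.
case: m => [_|m]; first by rewrite add0n; apply: augpowMl.
case: n => [Ix _|n]; first by rewrite addn0; apply: augpowMr.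
move=> Ix Iy; apply: (Addspan_map (phi := fun x => KGmul x y)) Ix => [|x1 x2|x' Ix'].
- exact: KGmul0l.
- exact: KGmulDl.
apply: (Addspan_map (phi := KGmul x')) Iy => [|y1 y2|y' Iy'].
- exact: KGmul0r.
- exact: KGmulDr.
by apply: Addspan_in; apply: (prodn_mul Ix' Iy').
Qed.

Lemma augpow_submod n : Ksubmodule (@augpow G K q n).
Proof.
case: n => [|n]; first by [].
split=> [|k x y Ix Iy]; first exact: Addspan_0.
apply: Addspan_add => //.
apply: (Addspan_map (phi := fun x => k *: x)) Ix => [|x1 x2|z Iz].
- exact: scaler0.
- exact: scalerDr.
apply: Addspan_in; rewrite -[z]KGmul1l -KGmulZl; exact: prodnMl.
Qed.

Lemma prodnS n (x : KT q q) : prodn n.+2 I x -> prodn n.+1 I x.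
Proof.
move=> /= [x1 [x' [Ix1 [[x2 [x3 [Ix2 [Ix3 ->]]]] ->]]]].
by exists (KGmul x1 x2), x3; rewrite KGmulA; split=> //; apply: augidealMr.
Qed.

Lemma augpowS n (x : KT q q) : augpow n.+1 x -> augpow n x.
Proof. by case: n => // n; apply/Addspan_mono/prodnS. Qed.

Lemma augpow1E (x : KT q q) : I x <-> augpow 1 x.
Proof.
split=> [Ix | /=]; first by apply: Addspan_in; exists x, (KGone K q); rewrite KGmul1r.
elim=> [_ [y [_ [Iy [-> ->]]]] | | y z _ Iy _ Iz]; rewrite /augideal augmentationE.
- by rewrite augM -augmentationE Iy mul0r.
- exact: aug0.
- by rewrite augD -!augmentationE Iy Iz addr0.
Qed.

End Diagonal.

Lemma augpow_morph p0 p1 (phi : KT p1 p1 -> KT p0 p0) :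
  phi 0 = 0 -> {morph phi : x y / x + y} ->
  phi (KGone K p1) = KGone K p0 ->
  (forall x y, phi (KGmul x y) = KGmul (phi x) (phi y)) ->
  (forall x, aug (phi x) = aug x) ->
  forall n x, augpow n x -> augpow n (phi x).
Proof.
move=> phi0 phiD phi1 phiM aug_phi [//|n].
apply: (Addspan_map (phi := phi)) => // x Ix; apply: Addspan_in.
apply: (prodn_morph phi1 phiM) Ix => y.
by rewrite /augideal !augmentationE aug_phi.
Qed.

Definition cnj p0 p1 (a : H p0 p1) (z : KT p1 p1) : KT p0 p0 :=
  KGmul (KGmul << a >> z) << ginv a >>.

Lemma augpow_cnj p0 p1 (a : H p0 p1) n z : augpow n z -> augpow n (cnj a z).
Proof.
apply: augpow_morph => [|x y||x y|x]; rewrite /cnj.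
- by rewrite KGmul0r KGmul0l.
- by rewrite KGmulDr KGmulDl.
- by rewrite KGmul1r KGmulUV.
- by rewrite -!KGmulA [KGmul << ginv a >> _]KGmulA KGmulVU KGmul1l.
- by rewrite !augM !augU mulr1 mul1r.
Qed.

End AugmentationPowers.

Section AugmentationFiltration.
Variables (G : groupoid) (K : comNzRingType).
Local Notation H := (@ghom G).
Local Notation KT p0 p1 := {malg K[H p0 p1]}.

Definition augfil p0 p1 (n : nat) (x : KT p0 p1) : Prop :=
  forall g : H p1 p0, augpow n (KGmul x << g >>).

Lemma augfil_diag q n (x : KT q q) : augfil n x <-> augpow n x.
Proof.
split=> [Fx | Ix g]; last exact: augpowMr.
by have := Fx (gid q); rewrite -[<< gid q >>]/(KGone K q) KGmul1r.
Qed.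

Lemma augfil_submod p0 p1 n : Ksubmodule (@augfil p0 p1 n).
Proof.
have [In0 In_lin] := @augpow_submod G K p0 n.
split=> [g | k x y Fx Fy g]; first by rewrite KGmul0l.
by rewrite KGmulDl KGmulZl; apply: In_lin.
Qed.

Lemma augfilS p0 p1 n (x : KT p0 p1) : augfil n.+1 x -> augfil n x.
Proof. by move=> Fx g; apply: augpowS. Qed.

Lemma KGmul_cnj p0 p1 p2 (a : H p0 p1) (g : H p2 p0) (x : KT p0 p1) (y : KT p1 p2) :
  KGmul (KGmul x y) << g >> =
  KGmul (KGmul x << ginv a >>) (cnj a (KGmul y << gmul g a >>)).
Proof.
have -> : << gmul g a >> = KGmul << g >> << a >> :> KT p2 p1.
  by rewrite KGmulUU mulr1.
rewrite /cnj -!KGmulA KGmulUV KGmul1r.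
by rewrite [KGmul << ginv a >> _]KGmulA KGmulVU KGmul1l.
Qed.

Lemma augfilM p0 p1 p2 m n (x : KT p0 p1) (y : KT p1 p2) :
  augfil m x -> augfil n y -> augfil (m + n) (KGmul x y).
Proof.
move=> Fx Fy g; have [x0 | [a _]] := fset_0Vmem (msupp x).
  have -> : x = 0 by apply/malgP => b; rewrite mcoeff0 mcoeff_outdom // x0.
  by rewrite !KGmul0l; apply: (proj1 (@augpow_submod G K p0 (m + n))).
by rewrite (KGmul_cnj a); apply: augpowM; [apply: Fx | apply/augpow_cnj/Fy].
Qed.

Lemma augfil_filtration : is_filtration augfil.
Proof.
split; first exact: augfil_submod.
split; first by [].
split; first exact: augfilS.
by move=> *; apply: augfilM.
Qed.

Lemma augfil_C1 : cond_C1 augfil.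
Proof.
move=> q; exists (@augmentation G K q); split; [|split].
- by move=> k x y; rewrite !augmentationE augD augZ.
- by move=> c; exists << c *g gid q >>; rewrite augmentationE augU.
- by move=> x; rewrite augfil_diag; exact: augpow1E.
Qed.

Lemma augfil_C4 : cond_C4 augfil.
Proof.
move=> q [//|n] _ x /augfil_diag Ix; apply/Addspan_Kspan.
apply: Addspan_mono Ix; apply: prodn_mono => y Iy.
exact/augfil_diag/augpow1E.
Qed.

End AugmentationFiltration.

Theorem proposition2p1p1 (G : groupoid) (K : comNzRingType) :
  exists F : forall p0 p1 : gob G, nat -> KG G K p0 p1 -> Prop,
    is_filtration F /\
    (forall q n x, F q q n x <-> augpow n x) /\
    cond_C1 F /\ cond_C4 F.
Proof.
exists (@augfil G K); split; first exact: augfil_filtration.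
split; first exact: augfil_diag.
split; [exact: augfil_C1 | exact: augfil_C4].
Qed.
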